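(* Let $\mathcal{K}\subset\mathbb{R}^n$ be a compact convex set and let $\phi:\mathcal{K}\to\mathbb{R}$ be continuous. Then for every $\varepsilon>0$ there exist a positive integer $p$ and, with $T=1/p$, a function $f_T\in\mathrm{DLSE}_T$ with rational parameters such that $|f_T(\mathbf{x})-\phi(\mathbf{x})|\leqslant\varepsilon$ for all $\mathbf{x}\in\mathcal{K}$.
   Context: For $T>0$, $\mathrm{LSE}_T$ denotes the class of functions $f_T:\mathbb{R}^n\to\mathbb{R}$ of the form $$f_T(\mathbf{x})=T\log\Big(\sum_{k=1}^K \exp\big(\langle\boldsymbol{\alpha}^{(k)},\mathbf{x}\rangle/T+\beta_k/T\big)\Big)$$ for some positive integer $K$, vectors $\boldsymbol{\alpha}^{(k)}\in\mathbb{R}^n$ and real numbers $\beta_k$. Such a function has rational parameters if $T$ is rational and it can be written in this form with all entries of the $\boldsymbol{\alpha}^{(k)}$ and all $\beta_k$ rational. $\mathrm{DLSE}_T$ is the class of functions $g_T-h_T$ with $g_T,h_T\in\mathrm{LSE}_T$ (same $T$); such a function has rational parameters if $g_T$ and $h_T$ both have rational parameters. *)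

From HB Require Import structures.
From mathcomp Require Import all_boot all_order all_algebra.
From mathcomp Require Import all_classical all_reals all_analysis.
Set Implicit Arguments. Unset Strict Implicit. Unset Printing Implicit Defensive.
Import Order.TTheory GRing.Theory Num.Theory.
Import numFieldNormedType.Exports.
Local Open Scope classical_set_scope.
Local Open Scope ring_scope.

Definition convex_set_rV (R : realType) (n : nat) (S : set 'rV[R]_n) : Prop :=
  forall x y (t : R), S x -> S y -> 0 <= t -> t <= 1 ->
    S (t *: x + (1 - t) *: y).

Definition dotrV (R : realType) (n : nat) (a x : 'rV[R]_n) : R :=
  \sum_(i < n) a ord0 i * x ord0 i.

(* f_T(x) = T log (sum_{k<K} exp(<alpha_k,x>/T + beta_k/T)),
   with K >= 1 terms (K.+1), real parameters. *)
Definition LSE (R : realType) (n : nat) (T : R) (K : nat)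
    (alpha : 'I_K.+1 -> 'rV[R]_n) (beta : 'I_K.+1 -> R) (x : 'rV[R]_n) : R :=
  T * ln (\sum_(k < K.+1) expR (dotrV (alpha k) x / T + beta k / T)).

Definition LSE_rat (R : realType) (n : nat) (T : R) (K : nat)
    (alpha : 'I_K.+1 -> 'rV[rat]_n) (beta : 'I_K.+1 -> rat) : 'rV[R]_n -> R :=
  LSE T (fun k => map_mx (@ratr R) (alpha k)) (fun k => ratr (beta k)).

(* f is in DLSE_T with rational parameters: f = g_T - h_T, g_T,h_T in LSE_T
   with rational parameters (T itself is given; rationality of T is asserted
   separately where relevant). *)
Definition DLSE_rat (R : realType) (n : nat) (T : R) (f : 'rV[R]_n -> R) : Prop :=
  exists (K1 K2 : nat) (a1 : 'I_K1.+1 -> 'rV[rat]_n) (b1 : 'I_K1.+1 -> rat)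
         (a2 : 'I_K2.+1 -> 'rV[rat]_n) (b2 : 'I_K2.+1 -> rat),
    forall x, f x = LSE_rat T a1 b1 x - LSE_rat T a2 b2 x.

From HB Require Import structures.
From mathcomp Require Import all_boot all_order all_algebra.
From mathcomp Require Import all_classical all_reals all_analysis.
From mathcomp Require Import ring lra finmap.
Set Implicit Arguments. Unset Strict Implicit. Unset Printing Implicit Defensive.
Import Order.TTheory GRing.Theory Num.Theory.
Import numFieldNormedType.Exports.
Local Open Scope classical_set_scope.
Local Open Scope ring_scope.

(* Cover the compact set by finitely many rational cells (d, r, q) on which
   phi stays within eps/8 of q.  Each cell gives the cone
   q + (2B+1)/r * |x - d|_oo, which lies above phi - eps/8 everywhere (B bounds
   |phi|) and below phi + eps/4 near d, so the minimum of the cones approximates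
   phi.  With P = 1/T, the cone is smoothed by q + T ln C(x), C(x) being the
   exponential sum 1 + sum_j (e^{P L (x_j - d_j)} + e^{-P L (x_j - d_j)}), and the
   minimum by -T ln sum_i e^{-P h_i}; both smoothings cost at most
   T ln (number of terms), which is small for large P.  Finally
   sum_i e^{-P q_i} / C_i(x) is a quotient of two exponential sums with rational
   exponents, so -T ln of it is a difference of two LSE_T functions with
   rational parameters. *)

Section ExponentialSums.
Variables (R : realType) (n : nat) (P : R).

Local Notation ratv := (map_mx (@ratr R)).

Definition expsum (s : seq ('rV[rat]_n * rat)) (x : 'rV[R]_n) : R :=
  \sum_(u <- s) expR (P * (dotrV (ratv u.1) x + ratr u.2)).

Definition exps_mul (s t : seq ('rV[rat]_n * rat)) :=
  [seq (u.1 + v.1, u.2 + v.2) | u <- s, v <- t].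

Lemma dotrVDl (a b x : 'rV[R]_n) : dotrV (a + b) x = dotrV a x + dotrV b x.
Proof. by rewrite /dotrV -big_split; apply: eq_bigr => i _; rewrite mxE mulrDl. Qed.

Lemma dotrV0l (x : 'rV[R]_n) : dotrV 0 x = 0.
Proof. by rewrite /dotrV big1 // => i _; rewrite mxE mul0r. Qed.

Lemma expsum_cat s t x : expsum (s ++ t) x = expsum s x + expsum t x.
Proof. exact: big_cat. Qed.

Lemma expsum_mul s t x : expsum (exps_mul s t) x = expsum s x * expsum t x.
Proof.
rewrite /expsum big_allpairs_dep mulr_suml; apply: eq_bigr => u _.
rewrite mulr_sumr; apply: eq_bigr => v _ /=.
by rewrite -expRD map_mxD dotrVDl rmorphD; congr expR; ring.
Qed.

Lemma expsum_const b x : expsum [:: (0, b)] x = expR (P * ratr b).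
Proof. by rewrite /expsum big_seq1 map_mx0 dotrV0l add0r. Qed.

Lemma expsum_ge0 s x : 0 <= expsum s x.
Proof. by apply: sumr_ge0 => u _; rewrite expR_ge0. Qed.

Lemma expsum_gt0 s x : s != [::] -> 0 < expsum s x.
Proof.
case: s => [//|u s] _; rewrite /expsum big_cons ltr_pwDl ?expR_gt0 //.
by apply: sumr_ge0 => v _; rewrite ltW ?expR_gt0.
Qed.

Lemma exps_mul_neq0 s t : s != [::] -> t != [::] -> exps_mul s t != [::].
Proof. by rewrite -!size_eq0 size_allpairs muln_eq0 => /negbTE-> /negbTE->. Qed.

Lemma LSE_rat_expsum s : s != [::] ->
  exists K (a : 'I_K.+1 -> 'rV[rat]_n) (b : 'I_K.+1 -> rat),
    forall x, LSE_rat P^-1 a b x = P^-1 * ln (expsum s x).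
Proof.
case: s => [//|u s] _.
exists (size s), (fun k => (nth u (u :: s) k).1), (fun k => (nth u (u :: s) k).2) => x.
rewrite /LSE_rat /LSE /expsum (big_nth u) big_mkord; congr (_ * ln _).
by apply: eq_bigr => k _; rewrite invrK; congr expR; ring.
Qed.

Definition expsum_ratio (F : 'rV[R]_n -> R) : Prop :=
  exists N D, [/\ N != [::], D != [::] & forall x, F x = expsum N x / expsum D x].

Lemma eq_expsum_ratio F G : F =1 G -> expsum_ratio F -> expsum_ratio G.
Proof. by move=> FG [N [D [N0 D0 FE]]]; exists N, D; split=> // x; rewrite -FG. Qed.

Lemma expsum_ratio_const b : expsum_ratio (fun=> expR (P * ratr b)).
Proof.
exists [:: (0, b)], [:: (0, 0)]; split=> // x.
by rewrite !expsum_const rmorph0 mulr0 expR0 divr1.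
Qed.

Lemma expsum_ratioD F G :
  expsum_ratio F -> expsum_ratio G -> expsum_ratio (F \+ G).
Proof.
move=> [N1 [D1 [N10 D10 FE]]] [N2 [D2 [N20 D20 GE]]].
exists (exps_mul N1 D2 ++ exps_mul N2 D1), (exps_mul D1 D2).
split; [by case: (exps_mul N1 D2) (exps_mul_neq0 N10 D20) | exact: exps_mul_neq0 |].
move=> x; rewrite /= FE GE expsum_cat !expsum_mul.
have := expsum_gt0 x D10; have := expsum_gt0 x D20.
by move=> /lt0r_neq0 ? /lt0r_neq0 ?; field; apply/andP.
Qed.

Lemma expsum_ratioM F G :
  expsum_ratio F -> expsum_ratio G -> expsum_ratio (F \* G).
Proof.
move=> [N1 [D1 [N10 D10 FE]]] [N2 [D2 [N20 D20 GE]]].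
exists (exps_mul N1 N2), (exps_mul D1 D2).
split; [exact: exps_mul_neq0 | exact: exps_mul_neq0 |].
by move=> x; rewrite /= FE GE !expsum_mul mulf_div.
Qed.

Lemma expsum_ratioV F : expsum_ratio F -> expsum_ratio (fun x => (F x)^-1).
Proof.
by move=> [N [D [N0 D0 FE]]]; exists D, N; split=> // x; rewrite FE invf_div.
Qed.

Lemma expsum_ratio_expsum s : s != [::] -> expsum_ratio (expsum s).
Proof.
move=> s0; exists s, [:: (0, 0)]; split=> // x.
by rewrite expsum_const rmorph0 mulr0 expR0 divr1.
Qed.

Lemma expsum_ratio_sum (A : Type) (cs : seq A) G (F : A -> 'rV[R]_n -> R) :
  expsum_ratio G -> (forall a, expsum_ratio (F a)) ->
  expsum_ratio (fun x => G x + \sum_(a <- cs) F a x).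
Proof.
move=> RG RF; elim: cs => [|a cs IH].
  by apply: eq_expsum_ratio RG => x; rewrite big_nil addr0.
apply: eq_expsum_ratio (expsum_ratioD IH (RF a)) => x.
by rewrite /= big_cons addrCA addrC.
Qed.

Lemma DLSE_rat_expsum_ratio F :
  expsum_ratio F -> DLSE_rat P^-1 (fun x => - (P^-1 * ln (F x))).
Proof.
move=> [N [D [N0 D0 FE]]].
have [K1 [a1 [b1 E1]]] := LSE_rat_expsum D0.
have [K2 [a2 [b2 E2]]] := LSE_rat_expsum N0.
exists K1, K2, a1, b1, a2, b2 => x; rewrite E1 E2 FE.
rewrite lnM ?posrE ?invr_gt0 ?expsum_gt0 // lnV ?posrE ?expsum_gt0 //; ring.
Qed.

End ExponentialSums.

Lemma expR_normr_le_cosh (R : realType) (c : R) : expR `|c| <= expR c + expR (- c).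
Proof.
by have := expR_gt0 c; have := expR_gt0 (- c); case: (ler0P c) => _ h1 h2; lra.
Qed.

Lemma cosh_le_expR_normr (R : realType) (c : R) : expR c + expR (- c) <= 2 * expR `|c|.
Proof.
have : expR (- `|c|) <= expR `|c| by rewrite ler_expR; have := normr_ge0 c; lra.
by case: (ler0P c) => _; rewrite ?opprK => h; lra.
Qed.

Section Cones.
Variables (R : realType) (n : nat) (P : R).
Hypothesis P_ge0 : 0 <= P.

Definition cone_exps (d : 'rV[rat]_n) (L : rat) : seq ('rV[rat]_n * rat) :=
  (0, 0) :: [seq (L *: delta_mx 0 j, - (L * d ord0 j)) | j <- enum 'I_n]
         ++ [seq (- L *: delta_mx 0 j, L * d ord0 j) | j <- enum 'I_n].

Lemma dotrV_delta j c (x : 'rV[R]_n) :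
  dotrV (map_mx (@ratr R) (c *: delta_mx 0 j)) x = ratr c * x ord0 j.
Proof.
rewrite /dotrV (bigD1 j) //= big1 ?addr0 => [|i ij]; first by rewrite !mxE !eqxx mulr1.
by rewrite !mxE (negbTE ij) mulr0 rmorph0 mul0r.
Qed.

Lemma expsum_cone d L x : expsum P (cone_exps d L) x =
  1 + \sum_j (expR (P * (ratr L * (x ord0 j - ratr (d ord0 j)))) +
              expR (- (P * (ratr L * (x ord0 j - ratr (d ord0 j)))))).
Proof.
rewrite /expsum big_cons map_mx0 dotrV0l rmorph0 addr0 mulr0 expR0; congr (_ + _).
rewrite big_cat !big_map -enumT !big_enum big_split /=; congr (_ + _);
  by apply: eq_bigr => j _; rewrite dotrV_delta ?rmorphN ?rmorphM; congr expR; ring.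
Qed.

Lemma expsum_cone_ge1 d L x : 1 <= expsum P (cone_exps d L) x.
Proof.
by rewrite expsum_cone lerDl; apply: sumr_ge0 => j _; rewrite addr_ge0 // ltW ?expR_gt0.
Qed.

Lemma normr_cone_exponent (d : 'rV[rat]_n) (L : rat) (x : 'rV[R]_n) j : 0 <= L ->
  `|P * (ratr L * (x ord0 j - ratr (d ord0 j)))| =
  P * (ratr L * `|x ord0 j - ratr (d ord0 j)|) :> R.
Proof. by move=> L0; rewrite normrM (ger0_norm P_ge0) normrM (ger0_norm (x := ratr L)) ?ler0q. Qed.

Lemma expsum_cone_ge (d : 'rV[rat]_n) (L : rat) (x : 'rV[R]_n) j : 0 <= L ->
  expR (P * (ratr L * `|x ord0 j - ratr (d ord0 j)|)) <= expsum P (cone_exps d L) x.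
Proof.
move=> L0; rewrite expsum_cone (bigD1 j) //= -normr_cone_exponent //.
apply: le_trans (expR_normr_le_cosh _) _; rewrite addrCA lerDl addr_ge0 //.
by apply: sumr_ge0 => i _; rewrite addr_ge0 // ltW ?expR_gt0.
Qed.

Lemma expsum_cone_le (d : 'rV[rat]_n) (L : rat) (x : 'rV[R]_n) (s : R) :
  0 <= L -> 0 <= s -> (forall j, `|x ord0 j - ratr (d ord0 j)| <= s) ->
  expsum P (cone_exps d L) x <= (2 * n + 1)%:R * expR (P * (ratr L * s)).
Proof.
move=> L0 s0 xs; set E := expR (P * (ratr L * s)).
have E_ge1 : 1 <= E by rewrite -expR0 ler_expR mulr_ge0 // mulr_ge0 // ler0q.
have term_le j : expR (P * (ratr L * (x ord0 j - ratr (d ord0 j)))) +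
    expR (- (P * (ratr L * (x ord0 j - ratr (d ord0 j))))) <= 2 * E.
  apply: le_trans (cosh_le_expR_normr _) _.
  by rewrite normr_cone_exponent // ler_pM2l // ler_expR ler_wpM2l // ler_wpM2l ?ler0q.
rewrite expsum_cone; apply: le_trans (lerD E_ge1 (ler_sum _ (fun j _ => term_le j))) _.
by rewrite sumr_const card_ord natrD natrM -[_ *+ n]mulr_natr; lra.
Qed.

End Cones.

Lemma ball_rowP (R : realType) (n : nat) (c y : 'rV[R]_n) (e : R) : 0 < e ->
  ball c e y <-> forall j, `|c ord0 j - y ord0 j| < e.
Proof.
move=> e0; split=> [[_ cy] j | cy]; first exact: cy.
by split=> // i j; rewrite (ord1 i); apply: cy.
Qed.

Lemma exists_ratr_near (R : realType) (x e : R) : 0 < e -> exists q : rat, `|x - ratr q| < e.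
Proof.
move=> e0; have [q] := @rat_in_itvoo R (x - e) (x + e) ltac:(lra).
by rewrite in_itv /= => /andP[? ?]; exists q; rewrite ltr_norml; apply/andP; split; lra.
Qed.

Lemma exists_rat_row_ball (R : realType) (n : nat) (c : 'rV[R]_n) (e : R) : 0 < e ->
  exists g : 'rV[rat]_n, ball c e (map_mx ratr g).
Proof.
move=> e0; have [g cg] := choice (fun j : 'I_n => exists_ratr_near (c ord0 j) e0).
by exists (\row_j g j); apply/ball_rowP => // j; rewrite !mxE.
Qed.

Lemma within_continuous_ball (R : realType) (n : nat) (K : set 'rV[R]_n)
    (f : 'rV[R]_n -> R) (c : 'rV[R]_n) (e : R) :
  {within K, continuous f} -> K c -> 0 < e ->
  exists2 d : R, 0 < d & forall y, K y -> ball c d y -> `|f c - f y| < e.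
Proof.
move=> fc Kc e0; have := (subspace_continuousP K f).1 fc c Kc.
move=> /cvgrPdist_lt /(_ e e0) /nbhs_ballP [d d0 fd].
by exists d => // y Ky cy; apply: fd.
Qed.

Lemma compact_continuous_bounded (R : realType) (n : nat) (K : set 'rV[R]_n)
    (f : 'rV[R]_n -> R) :
  compact K -> {within K, continuous f} -> exists B : nat, forall y, K y -> `|f y| <= B%:R.
Proof.
move=> Kc fc; have [M [_ fM]] := compact_bounded (continuous_compact fc Kc).
have M1 : M < `|M| + 1 by have := ler_norm M; lra.
exists (Num.Def.archi_bound (`|M| + 1)) => y Ky.
apply: le_trans (fM _ M1 (f y) (ex_intro2 _ _ y Ky erefl)) _.
by apply/ltW/archi_boundP; rewrite addr_ge0.
Qed.

Lemma exists_nat_le_expR (R : realType) (N : nat) (c : R) : 0 < c ->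
  exists2 p : nat, (0 < p)%N & forall k, (k <= N)%N -> k%:R <= expR (p%:R * c).
Proof.
move=> c0; set p := (Num.Def.archi_bound (N%:R / c)).+1.
have Np : N%:R < p%:R * c.
  rewrite -ltr_pdivrMr // (lt_le_trans (archi_boundP _)) ?ler_nat //.
  by rewrite divr_ge0 // ltW.
exists p => // k kN; apply: le_trans (expR_ge1Dx _).
have : k%:R <= N%:R :> R by rewrite ler_nat.
lra.
Qed.

Lemma neg_scaled_ln_bounds (R : realType) (P a b S : R) : 0 < P ->
  expR (- (P * b)) <= S -> S <= expR (- (P * a)) -> a <= - (P^-1 * ln S) <= b.
Proof.
move=> P_gt0 lo hi; have S_gt0 := lt_le_trans (expR_gt0 _) lo.
set t := - (P^-1 * ln S).
have lnS : ln S = - (P * t) by rewrite /t mulrN opprK mulrA mulfV ?gt_eqF ?mul1r.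
rewrite -ler_ln ?posrE ?expR_gt0 // expRK lnS lerN2 ler_pM2l // in lo.
rewrite -ler_ln ?posrE ?expR_gt0 // expRK lnS lerN2 ler_pM2l // in hi.
by rewrite lo hi.
Qed.

Section SoftminApproximation.
Variables (R : realType) (n : nat) (K : set 'rV[R]_n) (phi : 'rV[R]_n -> R).
Variables (B : nat) (eps : R).
Hypotheses (phi_le : forall y, K y -> `|phi y| <= B%:R).
Hypotheses (eps_gt0 : 0 < eps) (eps_le1 : eps <= 1).

Local Notation ratv := (map_mx (@ratr R)).

(* A cone of slope cone_height / r rises by 2B + 1 over the sup-distance r,
   more than phi can vary on K. *)
Definition cone_height : rat := (2 * B + 1)%:R.

Lemma ratr_cone_height : ratr cone_height = (2 * B + 1)%:R :> R.
Proof. exact: ratr_nat. Qed.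

Definition cell := ('rV[rat]_n * rat * rat)%type.

Definition good_cell (i : cell) : Prop :=
  let: (d, r, q) := i in
  [/\ 0 < r, - (B%:R + 1) <= ratr q :> R &
      forall y, K y -> ball (ratv d) (ratr r) y -> `|phi y - ratr q| <= eps / 8].

Definition inner_radius (r : rat) : R := eps * ratr r / (8 * ratr cone_height).

Definition cell_ball (i : cell) : set 'rV[R]_n :=
  let: (d, r, _) := i in ball (ratv d) (inner_radius r).

Definition cell_term (P : R) (i : cell) (x : 'rV[R]_n) : R :=
  let: (d, r, q) := i in
  expR (- (P * ratr q)) / expsum P (cone_exps d (cone_height / r)) x.

(* The constant term keeps the sum a quotient of nonempty exponential sums even
   for an empty cover. *)
Definition softmin_sum (P : R) (cs : seq cell) (x : 'rV[R]_n) : R :=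
  expR (- (P * B%:R)) + \sum_(i <- cs) cell_term P i x.

Lemma ratr_cone_height_ge1 : 1 <= ratr cone_height :> R.
Proof. by rewrite ratr_cone_height ler1n addn1. Qed.

(* [lra] ignores section hypotheses, hence the local copies below. *)
Lemma inner_radius_gt0 r : 0 < r -> 0 < inner_radius r.
Proof.
rewrite -(ltr0q R) => r_gt0; have h1 := ratr_cone_height_ge1; have e0 := eps_gt0.
by apply: divr_gt0; [exact: mulr_gt0 | lra].
Qed.

Lemma inner_radius_le r : 0 < r -> inner_radius r <= ratr r.
Proof.
rewrite -(ltr0q R) => r_gt0; have h1 := ratr_cone_height_ge1; have e1 := eps_le1.
rewrite /inner_radius ler_pdivrMr; last by lra.
have : 0 <= ratr cone_height - 1 :> R by lra.
by move/(mulr_ge0 (ltW r_gt0)); nra.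
Qed.

Lemma ratr_slope (r : rat) : ratr (cone_height / r) = ratr cone_height / ratr r :> R.
Proof. by rewrite fmorph_div. Qed.

Lemma slope_mul_inner_radius r : 0 < r ->
  ratr (cone_height / r) * inner_radius r = eps / 8.
Proof.
rewrite -(ltr0q R) => r_gt0; have h1 := ratr_cone_height_ge1.
rewrite ratr_slope /inner_radius.
by field; rewrite !gt_eqF //; lra.
Qed.

Lemma good_cell_cover : {within K, continuous phi} -> K `<=` cover good_cell cell_ball.
Proof.
move=> phic c Kc; have e0 := eps_gt0; have e1 := eps_le1.
have eps16 : 0 < eps / 16 by lra.
have [del del_gt0 phi_near] := within_continuous_ball phic Kc eps16.
have [r] : exists r : rat, ratr r \in `]0, del / 2[ by apply: rat_in_itvoo; lra.
rewrite in_itv /= ltr0q => /andP[r_gt0 r_lt].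
have rho_gt0 := inner_radius_gt0 r_gt0; have rho_le := inner_radius_le r_gt0.
have [g cg] := exists_rat_row_ball c rho_gt0.
have [q cq] := exists_ratr_near (phi c) eps16.
exists (g, r, q); last exact: ball_sym.
split=> //.
  by have := phi_le Kc; rewrite ltr_norml in cq; case/andP: cq; rewrite ler_norml; lra.
move=> y Ky gy; have cy : ball c del y.
  by apply: le_ball (ball_triangle cg gy); lra.
have := phi_near y Ky cy; rewrite distrC => yc.
have -> : phi y - ratr q = (phi y - phi c) + (phi c - ratr q) by ring.
by apply: le_trans (ler_normD _ _) _; lra.
Qed.

Lemma finite_good_cover : compact K -> {within K, continuous phi} ->
  exists cs : seq cell, (forall i, i \in cs -> good_cell i) /\
    forall x, K x -> exists2 i, i \in cs & cell_ball i x.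
Proof.
move=> Kc phic.
have cell_ball_open i : good_cell i -> open (cell_ball i).
  by case: i => [[d r] q] _; exact: ball_open.
move: Kc; rewrite compact_cover.
move=> /(_ _ _ _ cell_ball_open (good_cell_cover phic)) [D Dgood Dcov].
exists (enum_fset D); split=> [i /Dgood | x /Dcov [i Di xi]]; last by exists i.
by rewrite in_setE.
Qed.

Lemma cell_term_le (P : R) i x : 0 <= P -> good_cell i -> K x ->
  cell_term P i x <= expR (- (P * (phi x - eps / 8))).
Proof.
case: i => [[d r] q] P0 [r_gt0 q_ge near] Kx /=.
have := phi_le Kx; rewrite ler_norml => /andP[_ phix_le].
have r'_gt0 : 0 < ratr r :> R by rewrite ltr0q.
have L0 : 0 <= cone_height / r by rewrite divr_ge0 // ltW.
set C := expsum P _ x.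
have C_ge1 : 1 <= C := expsum_cone_ge1 _ _ _ _.
rewrite ler_pdivrMr ?(lt_le_trans ltr01) //.
suff : expR (P * (phi x - eps / 8 - ratr q)) <= C.
  move/(ler_wpM2l (ltW (expR_gt0 (- (P * (phi x - eps / 8)))))).
  by rewrite -expRD; apply: le_trans; rewrite ler_expR; lra.
case: (pselect (ball (ratv d) (ratr r) x)) => [xd | /(ball_rowP _ _ r'_gt0)/existsNP[j]].
  apply: le_trans C_ge1; rewrite expR_le1.
  have := near x Kx xd; rewrite ler_norml => /andP[_ phix_near].
  by rewrite mulr_ge0_le0 //; lra.
move=> /negP; rewrite -leNgt distrC => rj; apply: le_trans (expsum_cone_ge P0 _ _ j L0).
rewrite ler_expR ler_wpM2l // ratr_slope; rewrite mxE in rj.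
have slope_ge0 : 0 <= ratr cone_height / ratr r :> R by rewrite -ratr_slope ler0q.
apply: le_trans (ler_wpM2l slope_ge0 rj).
rewrite divfK ?gt_eqF // ratr_cone_height natrD natrM.
by have := eps_gt0; lra.
Qed.

Lemma cell_term_ge (P : R) i x : 0 <= P -> good_cell i -> K x -> cell_ball i x ->
  expR (- (P * (phi x + eps / 4))) / (2 * n + 1)%:R <= cell_term P i x.
Proof.
case: i => [[d r] q] P0 [r_gt0 q_ge near] Kx /= xd.
have r'_gt0 : 0 < ratr r :> R by rewrite ltr0q.
have L0 : 0 <= cone_height / r by rewrite divr_ge0 // ltW.
have q_le : ratr q <= phi x + eps / 8.
  have := near x Kx (le_ball (inner_radius_le r_gt0) xd).
  by rewrite ler_norml => /andP[? ?]; lra.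
have C_le : expsum P (cone_exps d (cone_height / r)) x <=
    (2 * n + 1)%:R * expR (P * (eps / 8)).
  rewrite -(slope_mul_inner_radius r_gt0).
  apply: expsum_cone_le => //; first exact/ltW/inner_radius_gt0.
  move=> j; move/(ball_rowP _ _ (inner_radius_gt0 r_gt0)): xd => /(_ j).
  by rewrite mxE distrC => /ltW.
have C_gt0 := lt_le_trans ltr01 (expsum_cone_ge1 P d (cone_height / r) x).
rewrite ler_pdivrMr; last by rewrite ltr0n addn1.
rewrite mulrAC ler_pdivlMr //.
apply: le_trans (ler_wpM2l (ltW (expR_gt0 _)) C_le) _.
rewrite mulrCA [X in _ <= X]mulrC ler_wpM2l ?ler0n // -expRD ler_expR.
by have := ler_wpM2l P0 q_le; lra.
Qed.

Lemma expsum_ratio_softmin_sum (P : R) cs : expsum_ratio P (softmin_sum P cs).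
Proof.
have expsum_ratio_expRN b : expsum_ratio P (fun _ : 'rV[R]_n => expR (- (P * ratr b))).
  by apply: eq_expsum_ratio (expsum_ratio_const n P (- b)) => x; rewrite rmorphN mulrN.
apply: expsum_ratio_sum => [|[[d r] q]].
  by apply: eq_expsum_ratio (expsum_ratio_expRN B%:R) => x; rewrite ratr_nat.
exact/expsum_ratioM/expsum_ratioV/expsum_ratio_expsum.
Qed.

Lemma softmin_sum_le (P : R) cs x : 0 <= P -> (forall i, i \in cs -> good_cell i) -> K x ->
  (size cs).+1%:R <= expR (P * (eps / 2)) ->
  softmin_sum P cs x <= expR (- (P * (phi x - 5 * eps / 8))).
Proof.
move=> P0 cs_good Kx cs_small; set E := expR (- (P * (phi x - eps / 8))).
have := phi_le Kx; rewrite ler_norml => /andP[_ phix_le].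
have B_le : expR (- (P * B%:R)) <= E.
  by rewrite ler_expR lerN2 ler_wpM2l //; have := eps_gt0; lra.
have sum_le : \sum_(i <- cs) cell_term P i x <= (size cs)%:R * E.
  rewrite big_seq; apply: le_trans (ler_sum _ (fun i ci => cell_term_le P0 (cs_good i ci) Kx)) _.
  by rewrite -big_seq big_const_seq count_predT iter_addr_0 mulr_natl.
apply: le_trans (lerD B_le sum_le) _.
have -> : expR (- (P * (phi x - 5 * eps / 8))) = expR (P * (eps / 2)) * E.
  by rewrite /E -expRD; congr expR; field.
apply: le_trans (ler_wpM2r (expR_ge0 _) cs_small).
by rewrite -natr1 -/E; lra.
Qed.

Lemma softmin_sum_ge (P : R) cs x : 0 <= P -> (forall i, i \in cs -> good_cell i) -> K x ->
  (exists2 i, i \in cs & cell_ball i x) -> (2 * n + 1)%:R <= expR (P * (eps / 2)) ->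
  expR (- (P * (phi x + 3 * eps / 4))) <= softmin_sum P cs x.
Proof.
move=> P0 cs_good Kx [i ci xi] n_small.
have term_ge0 j : 0 <= cell_term P j x.
  by case: j => [[d r] q]; rewrite divr_ge0 ?expR_ge0 ?expsum_ge0.
have term_le : cell_term P i x <= softmin_sum P cs x.
  by rewrite /softmin_sum (big_rem _ ci) /= addrCA lerDl addr_ge0 ?expR_ge0 ?sumr_ge0.
apply: le_trans term_le; apply: le_trans (cell_term_ge P0 (cs_good i ci) Kx xi).
rewrite ler_pdivlMr; last by rewrite ltr0n addn1.
rewrite mulrC; apply: le_trans (ler_wpM2r (expR_ge0 _) n_small) _.
by rewrite -expRD ler_expR; lra.
Qed.
End SoftminApproximation.

Unset Implicit Arguments.

Theorem theorem2 (R : realType) (n : nat) (Kset : set 'rV[R]_n)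
    (phi : 'rV[R]_n -> R) :
  compact Kset -> convex_set_rV Kset -> {within Kset, continuous phi} ->
  forall eps : R, 0 < eps ->
  exists (p : nat) (f : 'rV[R]_n -> R),
    (0 < p)%N /\ DLSE_rat (p%:R^-1) f /\
    forall x, Kset x -> `|f x - phi x| <= eps.
Proof.
move=> Kc _convex phic eps; wlog eps_le1 : eps / eps <= 1 => [small_eps eps_gt0 | eps_gt0].
  have min_le1 : Num.min eps 1 <= 1 by rewrite ge_min lexx orbT.
  have min_gt0 : 0 < Num.min eps 1 by rewrite lt_min eps_gt0 ltr01.
  have [p [f [p_gt0 [f_DLSE f_near]]]] := small_eps _ min_le1 min_gt0.
  exists p, f; split => //; split => // x Kx; apply: le_trans (f_near x Kx) _.
  by rewrite ge_min lexx.
have [B phi_le] := compact_continuous_bounded Kc phic.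
have [cs [cs_good cs_cover]] := finite_good_cover phi_le eps_gt0 eps_le1 Kc phic.
have eps2_gt0 : 0 < eps / 2 by lra.
have [p p_gt0 p_large] := exists_nat_le_expR ((size cs).+1 + (2 * n + 1)) eps2_gt0.
set P : R := p%:R; have P_gt0 : 0 < P by rewrite ltr0n.
exists p, (fun x => - (P^-1 * ln (softmin_sum B P cs x))); split => //; split.
  exact/DLSE_rat_expsum_ratio/expsum_ratio_softmin_sum.
move=> x Kx.
have lo := softmin_sum_ge eps_gt0 eps_le1 (ltW P_gt0) cs_good Kx (cs_cover x Kx)
  (p_large _ (leq_addl _ _)).
have hi := softmin_sum_le phi_le eps_gt0 (ltW P_gt0) cs_good Kx
  (p_large _ (leq_addr _ _)).
have /andP[] := neg_scaled_ln_bounds P_gt0 lo hi.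
by rewrite ler_norml; lra.
Qed.
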